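(* Let $P=\{x\in\mathbb{R}^n: Ax\ge b\}$ with rational data be full-dimensional and pointed, let $\mathcal{I}\subseteq\{1,\dots,n\}$ and $P_I=\{x\in P: x_j\in\mathbb{Z}\ \forall j\in\mathcal{I}\}$. Let $\mathcal{T}$ be a finite index set and $P^t=\{x\in P: D^tx\ge D^t_0\}$, $t\in\mathcal{T}$, be the terms of a disjunction with $P_I\subseteq P_D:=\operatorname{cl}\operatorname{conv}(\bigcup_{t}P^t)$. For $t\in\mathcal{T}$ let $\mathcal{P}^{t*}$ and $\mathcal{R}^{t*}$ be the complete sets of extreme points and extreme rays of $P^t$, and let $\mathcal{P}^*=\bigcup_t\mathcal{P}^{t*}$, $\mathcal{R}^*=\bigcup_t\mathcal{R}^{t*}$. Then $(\mathcal{P}^*,\mathcal{R}^* )$ is proper. Every extreme ray solution $(\alpha,\beta)$ of the associated PRLP corresponds to a facet $\alpha^\top x\ge\beta$ of $P_D$. Conversely, for every facet $\alpha^\top x\ge\beta$ of $P_D$, the solution $(\alpha,\beta)$ to the PRLP is feasible and extreme.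
   Context: For finite sets $\mathcal{P},\mathcal{R}\subset\mathbb{R}^n$, the point-ray linear program (PRLP) has feasible region $\{(\alpha,\beta)\in\mathbb{R}^n\times\mathbb{R}: \alpha^\top p\ge\beta\ \forall p\in\mathcal{P},\ \alpha^\top r\ge 0\ \forall r\in\mathcal{R}\}$ (a polyhedral cone; ''extreme'' means an extreme ray of this cone). The collection $(\mathcal{P},\mathcal{R})$ is proper if $\alpha^\top x\ge\beta$ is valid for $P_I$ whenever $(\alpha,\beta)$ is feasible for the PRLP.
   Formalization: The claim that extreme ray solutions give facets covers only those with α ≠ 0, and the converse (every facet of $P_D$ is feasible and extreme) assumes $P_D$ is full-dimensional. The statement above fails without it. *)

From HB Require Import structures.
From mathcomp Require Import all_boot all_order all_algebra.
From mathcomp Require Import reals.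
Set Implicit Arguments. Unset Strict Implicit. Unset Printing Implicit Defensive.
Import Order.TTheory GRing.Theory Num.Theory.
Local Open Scope ring_scope.

Section Defs.
Variables (R : realType) (n : nat).
Local Notation vec := 'cV[R]_n.

Definition dot (a x : vec) : R := \sum_(i < n) a i 0 * x i 0.

Definition rational_mx (p q : nat) (M : 'M[R]_(p, q)) : Prop :=
  forall i j, exists r : rat, M i j = ratr r.

Definition polyh (m : nat) (M : 'M[R]_(m, n)) (c : 'cV[R]_m) (x : vec) : Prop :=
  forall i, c i 0 <= (M *m x) i 0.

Definition mixed_int (S : vec -> Prop) (I : {set 'I_n}) (x : vec) : Prop :=
  S x /\ (forall j, j \in I -> x j 0 \is a Num.int).

Definition conv (S : vec -> Prop) (x : vec) : Prop :=
  exists (k : nat) (pts : 'I_k -> vec) (lam : 'I_k -> R),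
    (forall i, S (pts i)) /\ (forall i, 0 <= lam i) /\ \sum_i lam i = 1 /\
    x = \sum_i lam i *: pts i.

(* topological closure (sup-norm, equivalently Euclidean) *)
Definition cl_set (S : vec -> Prop) (x : vec) : Prop :=
  forall eps : R, 0 < eps -> exists y, S y /\ forall i, `|x i 0 - y i 0| < eps.

Definition affine_indep (k : nat) (pts : 'I_k -> vec) : Prop :=
  forall lam : 'I_k -> R, \sum_i lam i *: pts i = 0 -> \sum_i lam i = 0 ->
    forall i, lam i = 0.

(* S contains k affinely independent points (i.e. dim S >= k - 1) *)
Definition dim_ge (S : vec -> Prop) (k : nat) : Prop :=
  exists pts : 'I_k -> vec, (forall i, S (pts i)) /\ affine_indep pts.

(* dim S = k - 1 (k = 0 iff S is empty) *)
Definition dim_eqp (S : vec -> Prop) (k : nat) : Prop :=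
  dim_ge S k /\ ~ dim_ge S k.+1.

Definition full_dim (S : vec -> Prop) : Prop := dim_ge S n.+1.

Definition pointed (S : vec -> Prop) : Prop :=
  forall x d, S x -> (forall lam : R, S (x + lam *: d)) -> d = 0.

Definition valid_ineq (S : vec -> Prop) (a : vec) (beta : R) : Prop :=
  forall x, S x -> beta <= dot a x.

Definition facet (S : vec -> Prop) (a : vec) (beta : R) : Prop :=
  valid_ineq S a beta /\
  exists k, dim_eqp S k.+1 /\ dim_eqp (fun x => S x /\ dot a x = beta) k.

Definition extreme_point (S : vec -> Prop) (x : vec) : Prop :=
  S x /\ forall y z (lam : R), S y -> S z -> 0 < lam < 1 ->
    x = lam *: y + (1 - lam) *: z -> y = z.

Definition rec_cone (S : vec -> Prop) (r : vec) : Prop :=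
  forall x (lam : R), S x -> 0 <= lam -> S (x + lam *: r).

Definition extreme_ray_of (C : vec -> Prop) (r : vec) : Prop :=
  r != 0 /\ C r /\ forall r1 r2, C r1 -> C r2 -> r = r1 + r2 ->
    (exists mu : R, 0 <= mu /\ r1 = mu *: r) /\
    (exists mu : R, 0 <= mu /\ r2 = mu *: r).

Definition extreme_ray (S : vec -> Prop) (r : vec) : Prop :=
  extreme_ray_of (rec_cone S) r.

Definition complete_rays (S : vec -> Prop) (Rs : seq vec) : Prop :=
  (forall r, r \in Rs -> extreme_ray S r) /\
  (forall r, extreme_ray S r -> exists mu : R, 0 < mu /\ mu *: r \in Rs).

Definition prlp_feasible (Pts Rays : vec -> Prop) (a : vec) (beta : R) : Prop :=
  (forall p, Pts p -> beta <= dot a p) /\ (forall r, Rays r -> 0 <= dot a r).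

Definition prlp_extreme (Pts Rays : vec -> Prop) (a : vec) (beta : R) : Prop :=
  prlp_feasible Pts Rays a beta /\ (a != 0 \/ beta != 0) /\
  forall a1 b1 a2 b2, prlp_feasible Pts Rays a1 b1 -> prlp_feasible Pts Rays a2 b2 ->
    a = a1 + a2 -> beta = b1 + b2 ->
    (exists mu : R, 0 <= mu /\ a1 = mu *: a /\ b1 = mu * beta) /\
    (exists mu : R, 0 <= mu /\ a2 = mu *: a /\ b2 = mu * beta).

Definition proper_coll (PI : vec -> Prop) (Pts Rays : vec -> Prop) : Prop :=
  forall a beta, prlp_feasible Pts Rays a beta -> valid_ineq PI a beta.

End Defs.

From HB Require Import structures.
From mathcomp Require Import all_boot all_order all_algebra.
From mathcomp Require Import reals.
From mathcomp Require Import ring lra zify.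
From Stdlib Require Import Classical FunctionalExtensionality PropExtensionality.
Import Order.TTheory GRing.Theory Num.Theory.
Local Open Scope ring_scope.
Set Implicit Arguments. Unset Strict Implicit. Unset Printing Implicit Defensive.

(* The terms are pointed, so along any direction
   decreasing [a.x] one either reaches a vertex or finds an extreme ray of the recession
   cone; hence [a.x >= b] is valid on every [P^t], on their closed convex hull [P_D], and
   on [P_I].
   An extreme solution [(a, b)] with [a <> 0] can only be perturbed along itself: a
   direction [(c, gam)] vanishing on the finitely many tight points and rays keeps
   [(a, b) +- e (c, gam)] feasible for small [e]. So the tight points and the points
   [p_0 + r] for tight rays [r] span the hyperplane [a.x = b]; they give [n] affinely
   independent points of [P_D] on it, and one point of [P_D] lies off it: a facet.
   Conversely, if [a.x >= b] is a facet of a full-dimensional [P_D], any splitting of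
   [(a, b)] into two valid inequalities is tight on [n] affinely independent points of the
   facet, which forces both parts to be nonnegative multiples of [(a, b)]. *)

Section Dot.
Variables (R : realType) (n : nat).
Local Notation vec := 'cV[R]_n.
Implicit Types (a x y : vec) (s : R).

Lemma dotDr a x y : dot a (x + y) = dot a x + dot a y.
Proof. by rewrite /dot -big_split /=; apply: eq_bigr => i _; rewrite mxE mulrDr. Qed.

Lemma dotZr a x s : dot a (s *: x) = s * dot a x.
Proof. by rewrite /dot mulr_sumr; apply: eq_bigr => i _; rewrite mxE mulrCA. Qed.

Lemma dotDl a b x : dot (a + b) x = dot a x + dot b x.
Proof. by rewrite /dot -big_split /=; apply: eq_bigr => i _; rewrite mxE mulrDl. Qed.

Lemma dotZl a x s : dot (s *: a) x = s * dot a x.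
Proof. by rewrite /dot mulr_sumr; apply: eq_bigr => i _; rewrite mxE mulrA. Qed.

Lemma dot0r a : dot a 0 = 0.
Proof. by rewrite -(scale0r 0) dotZr mul0r. Qed.

Lemma dot0l x : dot 0 x = 0.
Proof. by rewrite -(scale0r 0) dotZl mul0r. Qed.

Lemma dotNr a x : dot a (- x) = - dot a x.
Proof. by rewrite -scaleN1r dotZr mulN1r. Qed.

Lemma dotNl a x : dot (- a) x = - dot a x.
Proof. by rewrite -scaleN1r dotZl mulN1r. Qed.

Lemma dotBr a x y : dot a (x - y) = dot a x - dot a y.
Proof. by rewrite dotDr dotNr. Qed.

Lemma dotBl a b x : dot (a - b) x = dot a x - dot b x.
Proof. by rewrite dotDl dotNl. Qed.

Lemma dot_sumr a k (F : 'I_k -> vec) : dot a (\sum_i F i) = \sum_i dot a (F i).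
Proof.
elim/big_ind2: _ => [|x1 x2 y1 y2 <- <-|//]; [exact: dot0r | exact: dotDr].
Qed.

Lemma dot_trmx a x : dot a x = (a^T *m x) 0 0.
Proof. by rewrite /dot mxE; apply: eq_bigr => i _; rewrite mxE. Qed.

End Dot.

Section Enumerations.
Variable V : eqType.

Definition enumerates (L : seq V) (X : V -> Prop) := forall x, X x <-> x \in L.

Lemma enumerates_inj (F : finType) (X : V -> Prop) (f : V -> F) :
  (forall x y, X x -> X y -> f x = f y -> x = y) -> exists L, enumerates L X.
Proof.
move=> f_inj.
suff [L LX] : exists L : seq V, forall x, (X x /\ f x \in enum F) <-> x \in L.
  by exists L => x; split=> [Xx|/LX[] //]; apply/LX; rewrite mem_enum.
elim: (enum F) => [|y s [L LX]]; first by exists [::] => x; split=> [[]|].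
case: (classic (exists x0, X x0 /\ f x0 = y)) => [[x0 [Xx0 fx0]]|no_x0].
  exists (x0 :: L) => x; rewrite in_cons; split.
    case=> Xx; rewrite in_cons => /orP[/eqP fx|fs]; last by apply/orP; right; apply/LX.
    by rewrite (f_inj x x0) ?eqxx // fx0.
  case/orP=> [/eqP->|/LX[Xx fs]]; first by rewrite fx0 mem_head.
  by rewrite in_cons fs orbT.
exists L => x; split=> [[Xx]|/LX[Xx fs]]; last by rewrite in_cons fs orbT.
rewrite in_cons => /orP[/eqP fx|fs]; last exact/LX.
by case: no_x0; exists x.
Qed.

Lemma enumerates_bigcup (T : finType) (X : T -> V -> Prop) :
  (forall t, exists L, enumerates L (X t)) ->
  exists L, enumerates L (fun x => exists t, X t x).
Proof.
move=> XL.
suff [L LX] : exists L : seq V, forall x, (exists2 t, t \in enum T & X t x) <-> x \in L.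
  exists L => x; split=> [[t Xt]|/LX[t _ Xt]]; last by exists t.
  by apply/LX; exists t; rewrite ?mem_enum.
elim: (enum T) => [|t s [L LX]]; first by exists [::] => x; split=> [[]|].
have [Lt LtX] := XL t.
exists (Lt ++ L) => x; rewrite mem_cat; split.
  case=> t'; rewrite in_cons => /orP[/eqP-> /LtX->//|t's Xt'].
  by apply/orP; right; apply/LX; exists t'.
case/orP=> [/LtX Xt|/LX[t' t's Xt']]; first by exists t; rewrite ?mem_head.
by exists t'; rewrite // in_cons t's orbT.
Qed.

End Enumerations.

Section RealBounds.
Variable R : realFieldType.

Lemma ray_bound_ge0 (beta u w : R) : (forall l, 0 <= l -> beta <= u + l * w) -> 0 <= w.
Proof.
move=> bound; rewrite leNgt; apply/negP => w_lt0.
pose l := (u - beta + 1) / - w.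
have lw : l * w = - (u - beta + 1) by rewrite /l; field; rewrite lt_eqF.
have := bound 0 (lexx _); rewrite mul0r addr0 => ub.
have l_ge0 : 0 <= l by rewrite divr_ge0 ?oppr_ge0 ?ltW //; lra.
by have := bound l l_ge0; rewrite lw; lra.
Qed.

Lemma exists_eps_perturb (X : eqType) (L : seq X) (f g : X -> R) :
  (forall x, x \in L -> 0 <= f x) -> (forall x, x \in L -> f x = 0 -> g x = 0) ->
  exists2 e, 0 < e & forall s, `|s| <= e -> forall x, x \in L -> 0 <= f x + s * g x.
Proof.
move=> f_ge0 fg0.
suff [e e_gt0 eg_le] : exists2 e, 0 < e & forall x, x \in L -> e * `|g x| <= f x.
  exists e => // s se x xL; have := eg_le x xL.
  have : `|s| * `|g x| <= e * `|g x| by rewrite ler_wpM2r.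
  have := ler_norm (- (s * g x)); rewrite normrN normrM; lra.
elim: L f_ge0 fg0 => [|y L IH] f_ge0 fg0; first by exists 1.
have [e e_gt0 eg_le] : exists2 e, 0 < e & forall x, x \in L -> e * `|g x| <= f x.
  by apply: IH => x xL; [apply: f_ge0 | apply: fg0]; rewrite inE xL orbT.
have fy_ge0 : 0 <= f y by apply: f_ge0; rewrite mem_head.
have [fy0|fy_neq0] := eqVneq (f y) 0.
  exists e => // x; rewrite inE => /orP[/eqP->|]; last exact: eg_le.
  by rewrite fy0 (fg0 y) ?mem_head // normr0 mulr0.
have gy1 : 0 < `|g y| + 1 by rewrite ltr_wpDl.
exists (Num.min e (f y / (`|g y| + 1))).
  by rewrite lt_min e_gt0 divr_gt0 // lt_neqAle eq_sym fy_neq0.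
move=> x; rewrite inE => /orP[/eqP->|xL].
  apply: (le_trans (y := f y / (`|g y| + 1) * `|g y|)).
    by rewrite ler_wpM2r // ge_min lexx orbT.
  by rewrite mulrAC ler_pdivrMr // ler_pM2l ?lerDl // lt_neqAle eq_sym fy_neq0.
by apply: le_trans (eg_le x xL); rewrite ler_wpM2r // ge_min lexx.
Qed.

End RealBounds.

Section Polyhedron.
Variables (R : realType) (n m : nat) (M : 'M[R]_(m, n)) (c : 'cV[R]_m).
Local Notation vec := 'cV[R]_n.
Local Notation Q := (polyh M c).
Implicit Types (a d e x y : vec) (s : R).

Definition tight x i := (M *m x) i 0 == c i 0.
Definition slack x := [set i | ~~ tight x i].
Definition basic x := forall d, (forall i, tight x i -> (M *m d) i 0 = 0) -> d = 0.

Lemma mulmx_lineE x d s i : (M *m (x + s *: d)) i 0 = (M *m x) i 0 + s * (M *m d) i 0.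
Proof. by rewrite mulmxDr -scalemxAr !mxE. Qed.

Lemma mulmxZ_entry d s i : (M *m (s *: d)) i 0 = s * (M *m d) i 0.
Proof. by rewrite -scalemxAr mxE. Qed.

Lemma mulmxN_entry d i : (M *m - d) i 0 = - (M *m d) i 0.
Proof. by rewrite mulmxN mxE. Qed.

Lemma mulmxB_entry x y i : (M *m (x - y)) i 0 = (M *m x) i 0 - (M *m y) i 0.
Proof. by rewrite mulmxBr !mxE. Qed.

Lemma polyh0E d : polyh M 0 d <-> forall i, 0 <= (M *m d) i 0.
Proof. by split=> Cd i; have := Cd i; rewrite !mxE. Qed.

Lemma line_polyh_ker x e : (forall l, Q (x + l *: e)) -> forall i, (M *m e) i 0 = 0.
Proof.
move=> line i; have Qline l : c i 0 <= (M *m x) i 0 + l * (M *m e) i 0.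
  by rewrite -mulmx_lineE; apply: line.
apply/le_anti/andP; split; last exact: (ray_bound_ge0 (fun l _ => Qline l)).
rewrite -oppr_ge0; apply: (ray_bound_ge0 (beta := c i 0) (u := (M *m x) i 0)) => l _.
by rewrite mulrN -mulNr.
Qed.

Lemma pointed_ker_eq0 x0 e : Q x0 -> pointed Q -> (forall i, (M *m e) i 0 = 0) -> e = 0.
Proof.
move=> Qx0 Qpt Me; apply: (Qpt x0 _ Qx0) => l i.
by rewrite mulmx_lineE Me mulr0 addr0; apply: Qx0.
Qed.

Lemma rec_coneE x0 : Q x0 -> rec_cone Q = polyh M 0.
Proof.
move=> Qx0; apply: functional_extensionality => r; apply: propositional_extensionality.
rewrite polyh0E; split=> [Qr i|Cr x l Qx l_ge0 i].
  by apply: (ray_bound_ge0 (beta := c i 0) (u := (M *m x0) i 0)) => l l_ge0;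
    rewrite -mulmx_lineE; apply: Qr.
by rewrite mulmx_lineE; have := Qx i; have := mulr_ge0 l_ge0 (Cr i); lra.
Qed.

(* The ratio test of the simplex method: move along [e] until a new row becomes tight. *)
Lemma ratio_test_step a x e : Q x ->
  (forall i, tight x i -> (M *m e) i 0 = 0) -> dot a e <= 0 ->
  (exists i, (M *m e) i 0 < 0) ->
  exists y, [/\ Q y, dot a y <= dot a x & (#|slack y| < #|slack x|)%N].
Proof.
move=> Qx tight_e ae_le0 [i1 Mi1].
pose step i := ((M *m x) i 0 - c i 0) / - (M *m e) i 0.
have [i0 /= Mi0 step_min] := @arg_minP _ _ _ i1 [pred i | (M *m e) i 0 < 0] step Mi1.
have step_ge0 : 0 <= step i0.
  by rewrite /step divr_ge0 // ?subr_ge0 ?oppr_ge0; [exact: Qx | exact: ltW].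
exists (x + step i0 *: e); split.
- move=> i; rewrite mulmx_lineE; case: (ltP ((M *m e) i 0) 0) => [Mi|Mi].
    by have := step_min i Mi; rewrite {2}/step ler_pdivlMr ?oppr_gt0 //; lra.
  by have := Qx i; have := mulr_ge0 step_ge0 Mi; lra.
- by rewrite dotDr dotZr gerDl mulr_ge0_le0.
- apply: proper_card; apply/properP; split.
    apply/subsetP => i; rewrite !inE; apply: contra => /eqP tx.
    by rewrite /tight mulmx_lineE (tight_e i) ?mulr0 ?addr0 ?tx //; apply/eqP.
  exists i0; rewrite !inE; first by apply/negP => /tight_e Me0; rewrite Me0 ltxx in Mi0.
  by rewrite negbK /tight mulmx_lineE /step; apply/eqP; field; rewrite lt_eqF.
Qed.

Lemma nonbasic_step a x : pointed Q -> Q x -> ~ basic x ->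
  (exists y, [/\ Q y, dot a y <= dot a x & (#|slack y| < #|slack x|)%N]) \/
  (exists d, polyh M 0 d /\ dot a d < 0).
Proof.
move=> Qpt Qx nb.
have [d [tight_d d_neq0]] : exists d, (forall i, tight x i -> (M *m d) i 0 = 0) /\ d <> 0.
  by apply: NNPP => nd; apply: nb => d td; apply: NNPP => dn; apply: nd; exists d.
have step_or_cone e : (forall i, tight x i -> (M *m e) i 0 = 0) -> dot a e <= 0 ->
    (exists y, [/\ Q y, dot a y <= dot a x & (#|slack y| < #|slack x|)%N]) \/ polyh M 0 e.
  move=> tight_e ae_le0; case: (classic (exists i, (M *m e) i 0 < 0)) => [neg|nneg].
    by left; exact: ratio_test_step Qx tight_e ae_le0 neg.
  by right; apply/polyh0E => i; rewrite leNgt; apply/negP => Mi; apply: nneg; exists i.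
have tightN e : (forall i, tight x i -> (M *m e) i 0 = 0) ->
    forall i, tight x i -> (M *m - e) i 0 = 0.
  by move=> tight_e i /tight_e Mi; rewrite mulmxN_entry Mi oppr0.
wlog ad_le0 : d tight_d d_neq0 / dot a d <= 0.
  move=> wl; case: (lerP (dot a d) 0) => [|/ltW ad]; first exact: wl.
  apply: (wl (- d)); first exact: tightN.
    by move/eqP; rewrite oppr_eq0 => /eqP.
  by rewrite dotNr oppr_le0.
case: (step_or_cone d tight_d ad_le0) => [|Cd]; first by left.
case: (ltrP (dot a d) 0) => [ad|ad_ge0]; first by right; exists d.
case: (step_or_cone (- d) (tightN d tight_d)) => [||CNd]; first 2 [by left].
  by rewrite dotNr oppr_le0.
case: d_neq0; apply: (pointed_ker_eq0 Qx Qpt) => i; apply/le_anti.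
move/polyh0E: CNd => /(_ i); move/polyh0E: Cd => /(_ i).
by rewrite mulmxN_entry oppr_ge0 => -> ->.
Qed.

Lemma basic_le_or_ray a x : pointed Q -> Q x ->
  (exists v, [/\ Q v, basic v & dot a v <= dot a x]) \/
  (exists d, polyh M 0 d /\ dot a d < 0).
Proof.
move=> Qpt; have [N] := ubnP #|slack x|; elim: N x => // N IH x le_N Qx.
case: (classic (basic x)) => [bx|/(nonbasic_step a Qpt Qx)]; first by left; exists x.
case=> [[y [Qy ay lt_yx]]|]; last by right.
have [[v [Qv bv av]]|] := IH y (leq_trans lt_yx le_N) Qy; last by right.
by left; exists v; split=> //; apply: le_trans ay.
Qed.

Lemma basic_extreme_point x : Q x -> basic x -> extreme_point Q x.
Proof.
move=> Qx bx; split=> // y z l Qy Qz /andP[l_gt0 l_lt1] xE.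
apply/eqP; rewrite -subr_eq0; apply/eqP; apply: bx => i /eqP tx.
have Mx : (M *m x) i 0 = l * (M *m y) i 0 + (1 - l) * (M *m z) i 0.
  by rewrite xE mulmxDr -!scalemxAr !mxE.
have hy_ge0 : 0 <= l * ((M *m y) i 0 - c i 0) by rewrite mulr_ge0 ?subr_ge0 ?(Qy i) ?ltW.
have hz_ge0 : 0 <= (1 - l) * ((M *m z) i 0 - c i 0) by rewrite mulr_ge0 ?subr_ge0 ?(Qz i) //; lra.
have /eqP hy : l * ((M *m y) i 0 - c i 0) = 0 by lra.
have /eqP hz : (1 - l) * ((M *m z) i 0 - c i 0) = 0 by lra.
move: hy; rewrite mulf_eq0 (gt_eqF l_gt0) subr_eq0 => /eqP hy.
move: hz; rewrite mulf_eq0 subr_eq0 (gt_eqF l_lt1) subr_eq0 => /eqP hz.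
by rewrite mulmxB_entry hy hz subrr.
Qed.

Lemma extreme_point_basic x : extreme_point Q x -> basic x.
Proof.
move=> [Qx x_ext] d tight_d.
have [e e_gt0 Qe] : exists2 e : R, 0 < e & forall s, `|s| <= e -> forall i, i \in enum 'I_m ->
    0 <= ((M *m x) i 0 - c i 0) + s * (M *m d) i 0.
  apply: exists_eps_perturb => i _; first by rewrite subr_ge0 Qx.
  by move/eqP; rewrite subr_eq0 => /tight_d.
have Qxd s : `|s| <= e -> Q (x + s *: d).
  by move=> se i; rewrite mulmx_lineE; have := Qe s se i (mem_enum _ i); lra.
have half : (0 < 2^-1 :> R) && (2^-1 < 1 :> R) by apply/andP; split; lra.
have e_norm : `|e| <= e /\ `|- e| <= e by rewrite normrN ger0_norm ?(ltW e_gt0).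
have xE : x = 2^-1 *: (x + e *: d) + (1 - 2^-1) *: (x + - e *: d).
  by apply/matrixP => i j; rewrite !mxE; field.
move: (x_ext _ _ _ (Qxd e e_norm.1) (Qxd (- e) e_norm.2) half xE) => /eqP.
rewrite -subr_eq0 opprD addrACA subrr add0r -scalerBl opprK.
by rewrite scaler_eq0 -mulr2n mulrn_eq0 /= (gt_eqF e_gt0) => /eqP.
Qed.

Lemma basic_uniq x y : basic x -> Q y -> (forall i, tight x i = tight y i) -> x = y.
Proof.
move=> bx Qy txy; apply/eqP; rewrite -subr_eq0; apply/eqP; apply: bx => i tx.
have /eqP ty : tight y i by rewrite -txy.
by move/eqP: tx; rewrite mulmxB_entry ty => ->; rewrite subrr.
Qed.

Lemma extreme_points_enum : exists L, enumerates L (extreme_point Q).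
Proof.
apply: (enumerates_inj (f := fun x => [set i | tight x i])) => x y.
move=> /extreme_point_basic bx [Qy _] /setP txy.
by apply: basic_uniq => // i; move: (txy i); rewrite !inE.
Qed.

End Polyhedron.

Lemma polyh_col_mx (R : realType) n m1 m2 (M1 : 'M[R]_(m1, n)) (M2 : 'M[R]_(m2, n))
    c1 c2 x :
  polyh (col_mx M1 M2) (col_mx c1 c2) x <-> polyh M1 c1 x /\ polyh M2 c2 x.
Proof.
rewrite /polyh mul_col_mx; split=> [Qx|[Q1 Q2] i].
  by split=> i; [have := Qx (lshift m2 i) | have := Qx (rshift m1 i)];
    rewrite ?col_mxEu ?col_mxEd.
by rewrite -(splitK i); case: (split i) => j /=; rewrite ?col_mxEu ?col_mxEd.
Qed.

Lemma pointed_polyh_col_mx (R : realType) n m1 m2 (M1 : 'M[R]_(m1, n))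
    (M2 : 'M[R]_(m2, n)) c1 c2 :
  pointed (polyh M1 c1) -> pointed (polyh (col_mx M1 M2) (col_mx c1 c2)).
Proof.
move=> Qpt x d /polyh_col_mx[Qx _] line; apply: (Qpt x d Qx) => l.
by have /polyh_col_mx[] := line l.
Qed.

Section ConeSlice.
Variables (R : realType) (n m : nat) (M : 'M[R]_(m, n)) (a : 'cV[R]_n).
Local Notation vec := 'cV[R]_n.
Local Notation C := (polyh M 0).
Hypothesis Cpt : pointed C.

Lemma cone_ker_eq0 (e : vec) : (forall i, (M *m e) i 0 = 0) -> e = 0.
Proof. by apply: (pointed_ker_eq0 (x0 := 0) _ Cpt) => i; rewrite mulmx0. Qed.

(* Vertices of the slice [{d in C | - a.d >= 1}] span extreme rays of [C] on which [a]
   is negative. *)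
Definition slice_mx : 'M[R]_(m + 1, n) := col_mx M (- a^T).
Definition slice_rhs : 'cV[R]_(m + 1) := col_mx 0 (const_mx 1).

Lemma slice_lastE (z : vec) : (- a^T *m z) 0 0 = - dot a z.
Proof. by rewrite mulNmx mxE -dot_trmx. Qed.

Lemma sliceE (z : vec) : polyh slice_mx slice_rhs z <-> C z /\ 1 <= - dot a z.
Proof.
rewrite polyh_col_mx; split=> [[Cz az]|[Cz az]]; split=> //.
  by have := az 0; rewrite slice_lastE mxE.
by move=> i; rewrite ord1 slice_lastE mxE.
Qed.

Lemma slice_basicP v : basic slice_mx slice_rhs v ->
  forall e : vec, (forall i, (M *m v) i 0 = 0 -> (M *m e) i 0 = 0) ->
  (- dot a v = 1 -> dot a e = 0) -> e = 0.
Proof.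
move=> bv e Me ae; apply: bv => i; rewrite /tight -(splitK i).
case: (split i) => j /=; rewrite !mul_col_mx ?col_mxEu ?col_mxEd => /eqP vi.
  by apply: Me; rewrite vi mxE.
by rewrite ord1 slice_lastE ae ?oppr0 //; move: vi; rewrite ord1 slice_lastE mxE.
Qed.

Lemma slice_basic_extreme_ray v :
  polyh slice_mx slice_rhs v -> basic slice_mx slice_rhs v -> extreme_ray_of C v.
Proof.
move=> /sliceE[Cv av] /slice_basicP bv.
have av1 : - dot a v = 1.
  case: (eqVneq (- dot a v) 1) => // av_neq1.
  have v0 : v = 0 by apply: bv => // /eqP; rewrite (negPf av_neq1).
  by move: av; rewrite v0 dot0r oppr0; lra.
have v_neq0 : v != 0.
  by apply/eqP => v0; move: av1; rewrite v0 dot0r oppr0 => /eqP; rewrite eq_sym oner_eq0.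
have split_ray r1 r2 : C r1 -> C r2 -> v = r1 + r2 -> exists mu : R, 0 <= mu /\ r1 = mu *: v.
  move=> /polyh0E C1 /polyh0E C2 vE.
  have r1E : r1 = (- dot a r1) *: v.
    apply/eqP; rewrite -subr_eq0; apply/eqP; apply: bv => [i vi|_].
      rewrite mulmxB_entry mulmxZ_entry vi mulr0 subr0.
      by have := C1 i; have := C2 i; move: vi; rewrite vE mulmxDr mxE; lra.
    by rewrite dotBr dotZr -[dot a v]opprK av1 mulrN1 opprK subrr.
  exists (- dot a r1); split=> //; rewrite leNgt; apply/negP => mu_lt0.
  move/negP: v_neq0; apply; apply/eqP; apply: cone_ker_eq0 => i.
  apply/le_anti; move/polyh0E: Cv => ->; rewrite andbT.
  by have := C1 i; rewrite {1}r1E mulmxZ_entry (nmulr_rge0 _ mu_lt0).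
split=> //; split=> // r1 r2 C1 C2 vE; split; first exact: split_ray vE.
by apply: (split_ray r2 r1 C2 C1); rewrite addrC.
Qed.

Lemma cone_ge0_of_extreme_rays :
  (forall r, extreme_ray_of C r -> 0 <= dot a r) -> forall d, C d -> 0 <= dot a d.
Proof.
move=> a_rays d Cd; rewrite leNgt; apply/negP => ad_lt0.
have slice_pt : pointed (polyh slice_mx slice_rhs).
  move=> z e _ line; apply: cone_ker_eq0 => i.
  by have := line_polyh_ker line (lshift 1 i); rewrite mul_col_mx col_mxEu.
pose z0 := (- (dot a d)^-1) *: d.
have slice_z0 : polyh slice_mx slice_rhs z0.
  apply/sliceE; split; last by rewrite dotZr mulNr opprK mulVf ?lt_eqF.
  have Md : forall i, 0 <= (M *m d) i 0 by apply/polyh0E.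
  by apply/polyh0E => i; rewrite mulmxZ_entry mulr_ge0 // oppr_ge0 invr_le0 ltW.
have [[v [slice_v bv _]]|[e [_]]] := basic_le_or_ray 0 slice_pt slice_z0; last first.
  by rewrite dot0l ltxx.
have := a_rays v (slice_basic_extreme_ray slice_v bv).
by have /sliceE[_] := slice_v; lra.
Qed.

End ConeSlice.

Lemma valid_polyh_of_extreme (R : realType) n m (M : 'M[R]_(m, n)) c (a : 'cV[R]_n) beta :
  pointed (polyh M c) ->
  (forall p, extreme_point (polyh M c) p -> beta <= dot a p) ->
  (forall r, extreme_ray (polyh M c) r -> 0 <= dot a r) ->
  valid_ineq (polyh M c) a beta.
Proof.
move=> Qpt a_pts a_rays x Qx.
have [[v [Qv bv av]]|[d [Cd ad_lt0]]] := basic_le_or_ray a Qpt Qx.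
  by apply: le_trans av; apply/a_pts/basic_extreme_point.
have Cpt : pointed (polyh M 0).
  move=> z e _ line; exact: pointed_ker_eq0 Qx Qpt (line_polyh_ker line).
rewrite /extreme_ray (rec_coneE Qx) in a_rays.
by have := cone_ge0_of_extreme_rays Cpt a_rays Cd; lra.
Qed.

Section Hull.
Variables (R : realType) (n : nat).
Local Notation vec := 'cV[R]_n.
Implicit Types (S : vec -> Prop) (a p q r x y : vec).

Lemma sub_conv S x : S x -> conv S x.
Proof.
move=> Sx; exists 1%N, (fun _ => x), (fun _ => 1).
by split=> //; split=> [_|]; rewrite ?ler01 // !big_ord1 scale1r.
Qed.

Lemma sub_clconv S x : S x -> cl_set (conv S) x.
Proof.
by move=> Sx e e_gt0; exists x; split=> [|i]; rewrite ?subrr ?normr0 //; apply: sub_conv.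
Qed.

Lemma conv_segment S y z (l : R) : S y -> S z -> 0 <= l <= 1 ->
  conv S (l *: y + (1 - l) *: z).
Proof.
move=> Sy Sz /andP[l_ge0 l_le1].
exists 2%N, (fun i : 'I_2 => if val i == 0%N then y else z),
  (fun i : 'I_2 => if val i == 0%N then l else 1 - l).
split; first by move=> i; case: ifP.
split; first by move=> i; case: ifP; rewrite ?subr_ge0.
by rewrite !big_ord_recr !big_ord0 /= !add0r; split=> //; rewrite addrC subrK.
Qed.

Lemma valid_conv S a b : valid_ineq S a b -> valid_ineq (conv S) a b.
Proof.
move=> Sab x [k [pts [lam [Spts [lam_ge0 [lam1 ->]]]]]].
rewrite dot_sumr -[b]mul1r -lam1 mulr_suml; apply: ler_sum => i _.
by rewrite dotZr ler_wpM2l // Sab.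
Qed.

Lemma dotB_le_dist a x y e : (forall i, `|x i 0 - y i 0| < e) ->
  dot a y - dot a x <= e * \sum_i `|a i 0|.
Proof.
move=> xy; rewrite -dotBr.
apply: (le_trans (ler_norm _)); apply: (le_trans (ler_norm_sum _ _ _)).
rewrite mulr_sumr; apply: ler_sum => i _; rewrite !mxE normrM mulrC.
by rewrite ler_wpM2r // distrC ltW.
Qed.

Lemma valid_clconv S a b : valid_ineq S a b -> valid_ineq (cl_set (conv S)) a b.
Proof.
move=> Sab x clx; rewrite leNgt; apply/negP => ax_lt.
have norm_ge0 : 0 <= \sum_i `|a i 0| by apply: sumr_ge0.
pose e := (b - dot a x) / (\sum_i `|a i 0| + 1).
have e_gt0 : 0 < e by rewrite divr_gt0 ?subr_gt0 // ltr_wpDl.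
have [y [convy xy]] := clx e e_gt0.
have := dotB_le_dist a xy; have := valid_conv Sab convy.
have : e * (\sum_i `|a i 0| + 1) = b - dot a x by rewrite divfK // lt0r_neq0 // ltr_wpDl.
by rewrite mulrDr mulr1; lra.
Qed.

(* The points [(1 - 1/l) p + (1/l) (q + l r) = p + r + (q - p) / l] of [conv S] tend to
   [p + r]. *)
Lemma clconv_add_ray S p q r : S p -> (forall l, 0 <= l -> S (q + l *: r)) ->
  cl_set (conv S) (p + r).
Proof.
move=> Sp Sqr e e_gt0.
pose N := \sum_i `|(q - p) i 0|.
have N_ge0 : 0 <= N by apply: sumr_ge0.
pose l := N / e + 1.
have l_ge1 : 1 <= l by rewrite lerDr divr_ge0 // ltW.
have l_gt0 : 0 < l by lra.
exists ((1 - l^-1) *: p + (1 - (1 - l^-1)) *: (q + l *: r)); split.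
  apply: conv_segment => //; first exact: Sqr (ltW l_gt0).
  by rewrite subr_ge0 invr_le1 ?unitfE ?gt_eqF // l_ge1 lerBlDr lerDl invr_ge0 ltW.
move=> i; rewrite !mxE.
have -> : p i 0 + r i 0 - ((1 - l^-1) * p i 0 + (1 - (1 - l^-1)) * (q i 0 + l * r i 0))
    = - (l^-1 * (q - p) i 0) by rewrite !mxE; field; rewrite gt_eqF.
rewrite normrN normrM ger0_norm ?invr_ge0 ?ltW // mulrC -(ltr_pM2r l_gt0) mulfVK ?gt_eqF //.
have qp_le : `|(q - p) i 0| <= N.
  by rewrite /N (bigD1 i) //= lerDl; apply: sumr_ge0.
have : e * l = N + e by rewrite /l mulrDr mulr1 mulrCA mulfV ?gt_eqF // mulr1.
lra.
Qed.

End Hull.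

Section AffineIndependence.
Variables (R : realType) (n : nat).
Local Notation vec := 'cV[R]_n.
Implicit Types (S : vec -> Prop) (a : vec) (b : R).

(* Points [p_i] as the rows [(p_i^T, 1)] and the hyperplane [a.x = b] as the column
   [(a, -b)]: affine independence is row-freeness, incidence is a zero product. *)
Definition hmx k (pts : 'I_k -> vec) : 'M[R]_(k, n + 1) :=
  row_mx (\matrix_(i, j) pts i j 0) (const_mx 1).
Definition hvec a b : 'cV[R]_(n + 1) := col_mx a (const_mx (- b)).

Lemma hmx_mul_eq0 k (pts : 'I_k -> vec) (v : 'rV[R]_k) :
  v *m hmx pts = 0 <-> \sum_i v 0 i *: pts i = 0 /\ \sum_i v 0 i = 0.
Proof.
have E1 : v *m (\matrix_(i, j) pts i j 0) = (\sum_i v 0 i *: pts i)^T.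
  by apply/matrixP => x j; rewrite ord1 !mxE summxE; apply: eq_bigr => i _; rewrite !mxE.
have E2 : v *m (const_mx 1 : 'M_(k, 1)) = const_mx (\sum_i v 0 i).
  by apply/matrixP => x j; rewrite ord1 !mxE; apply: eq_bigr => i _; rewrite mxE mulr1.
rewrite /hmx mul_mx_row E1 E2; split.
  move/eqP; rewrite row_mx_eq0 => /andP[/eqP sum_pts /eqP sum_v]; split.
    by rewrite -[LHS]trmxK sum_pts trmx0.
  by move/matrixP: sum_v => /(_ 0 0); rewrite !mxE.
move=> [-> sum_v]; apply/eqP; rewrite row_mx_eq0 trmx0 eqxx /=.
by apply/eqP/matrixP => x j; rewrite !mxE sum_v.
Qed.

Lemma affine_indepP k (pts : 'I_k -> vec) : affine_indep pts <-> row_free (hmx pts).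
Proof.
split=> [indep|free lam sum_pts sum_lam i].
  apply: inj_row_free => v /hmx_mul_eq0[sum_pts sum_v].
  by apply/matrixP => x i; rewrite ord1 mxE; apply: indep sum_pts sum_v i.
have : (\row_j lam j) *m hmx pts = 0.
  by apply/hmx_mul_eq0; split; [rewrite -[RHS]sum_pts | rewrite -[RHS]sum_lam];
    apply: eq_bigr => j _; rewrite mxE.
by move/eqP; rewrite mulmx_free_eq0 // => /eqP/matrixP/(_ 0 i); rewrite !mxE.
Qed.

Lemma hmx_hvec k (pts : 'I_k -> vec) a b i : (hmx pts *m hvec a b) i 0 = dot a (pts i) - b.
Proof.
rewrite /hmx /hvec mul_row_col mxE; congr (_ + _).
  by rewrite mxE /dot; apply: eq_bigr => j _; rewrite mxE mulrC.
by rewrite mxE big_ord1 !mxE mul1r.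
Qed.

Lemma hvecZ a b (mu : R) : hvec (mu *: a) (mu * b) = mu *: hvec a b.
Proof.
by rewrite /hvec scale_col_mx; congr col_mx; apply/matrixP => i j; rewrite !mxE mulrN.
Qed.

Lemma rowsub_hmx k k' (pts : 'I_k -> vec) (f : 'I_k' -> 'I_k) :
  rowsub f (hmx pts) = hmx (fun i => pts (f i)).
Proof.
apply/matrixP => i j; rewrite mxE /hmx -(splitK j); case: (split j) => j'.
  by rewrite !row_mxEl !mxE.
by rewrite !row_mxEr !mxE.
Qed.

Lemma affine_indep_sub k k' (pts : 'I_k -> vec) (g : 'I_k' -> 'I_k) :
  injective g -> affine_indep pts -> affine_indep (fun i => pts (g i)).
Proof.
move=> g_inj indep lam' sum_pts sum_lam i.
pose lam j := \sum_(i | g i == j) lam' i.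
have E1 : \sum_j lam j *: pts j = \sum_i lam' i *: pts (g i).
  rewrite (partition_big g xpredT) //=; apply: eq_bigr => j _.
  by rewrite /lam scaler_suml; apply: eq_bigr => i' /eqP ->.
have E2 : \sum_j lam j = \sum_i lam' i by rewrite (partition_big g xpredT).
have := indep lam; rewrite E1 E2 => /(_ sum_pts sum_lam (g i)).
by rewrite /lam (big_pred1 i) // => i' /=; apply/eqP/eqP => [/g_inj|->].
Qed.

Lemma dim_ge_le S i j : (i <= j)%N -> dim_ge S j -> dim_ge S i.
Proof.
move=> le_ij [pts [Spts indep]]; exists (fun x => pts (widen_ord le_ij x)); split=> //.
by apply: affine_indep_sub indep => x y /(congr1 val) /= /val_inj.
Qed.

Lemma affine_indep_card k (pts : 'I_k -> vec) : (n + 1 < k)%N -> ~ affine_indep pts.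
Proof.
move=> lt_k /affine_indepP /eqP free.
by have := rank_leq_col (hmx pts); rewrite free leqNgt lt_k.
Qed.

Lemma affine_indep_hyperplane (pts : 'I_(n + 1) -> vec) a b : affine_indep pts ->
  (forall i, dot a (pts i) = b) -> a = 0 /\ b = 0.
Proof.
move=> /affine_indepP; rewrite row_free_unit => unit_hmx on_hyp.
have incident : hmx pts *m hvec a b = 0.
  by apply/matrixP => i j; rewrite ord1 hmx_hvec on_hyp subrr mxE.
have /eqP : hvec a b = 0 by rewrite -(mulKmx unit_hmx (hvec a b)) incident mulmx0.
rewrite col_mx_eq0 => /andP[/eqP-> /eqP/matrixP/(_ 0 0)].
by rewrite !mxE => /eqP; rewrite oppr_eq0 => /eqP->.
Qed.

Lemma full_dim_off_hyperplane S a b : full_dim S -> ~ (a = 0 /\ b = 0) ->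
  exists y, S y /\ dot a y != b.
Proof.
move=> [pts [Spts indep]] ab_neq0; apply: NNPP => all_on; apply: ab_neq0.
pose g := cast_ord (addn1 n).
apply: (@affine_indep_hyperplane (fun i => pts (g i))).
  by apply: affine_indep_sub indep; exact: cast_ord_inj.
move=> i; apply: NNPP => off; apply: all_on; exists (pts (g i)); split=> //; exact/eqP.
Qed.

Definition ext_fam (xs : 'I_n -> vec) (y : vec) (i : 'I_(n + 1)) : vec :=
  if split i is inl j then xs j else y.

Lemma affine_indep_ext (xs : 'I_n -> vec) y a b : affine_indep xs ->
  (forall j, dot a (xs j) = b) -> dot a y != b -> affine_indep (ext_fam xs y).
Proof.
move=> indep on_hyp off_hyp lam sum_pts sum_lam.
have ext_l j : ext_fam xs y (lshift 1 j) = xs j by rewrite /ext_fam (unsplitK (inl _ j)).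
have ext_r : ext_fam xs y (rshift n ord0) = y by rewrite /ext_fam (unsplitK (inr _ ord0)).
rewrite big_split_ord /= big_ord1 ext_r in sum_pts.
rewrite big_split_ord /= big_ord1 in sum_lam.
rewrite (eq_bigr (fun j => lam (lshift 1 j) *: xs j)) in sum_pts; last first.
  by move=> j _; rewrite ext_l.
set ly := lam (rshift n ord0) in sum_pts sum_lam *.
have sum_xs : \sum_(j < n) lam (lshift 1 j) = - ly by apply/eqP; rewrite -addr_eq0 sum_lam.
have ly0 : ly = 0.
  have := congr1 (dot a) sum_pts; rewrite dot0r dotDr dot_sumr dotZr.
  under eq_bigr do rewrite dotZr on_hyp; rewrite -mulr_suml sum_xs => dot0.
  have : ly * (dot a y - b) = 0 by rewrite mulrBr; lra.
  by move/eqP; rewrite mulf_eq0 subr_eq0 (negPf off_hyp) orbF => /eqP.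
rewrite ly0 scale0r addr0 in sum_pts; rewrite ly0 oppr0 in sum_xs.
move=> i; rewrite -(splitK i); case: (split i) => j /=; first exact: indep sum_pts sum_xs j.
by rewrite ord1; exact: ly0.
Qed.

Lemma rank_hmx_ge k (pts : 'I_k -> vec) a b :
  (forall c gam, (forall i, dot c (pts i) = gam) -> exists nu : R, c = nu *: a /\ gam = nu * b) ->
  (n <= \rank (hmx pts))%N.
Proof.
move=> only_hyp; rewrite leqNgt; apply/negP => rank_lt.
pose K := kermx (hmx pts)^T.
have rankK : (2 <= \rank K)%N by rewrite mxrank_ker mxrank_tr; lia.
pose w := (hvec a b)^T.
have /row_subPn[i Ki_notin_w] : ~~ (K <= w)%MS.
  by apply/negP => /mxrankS; have := rank_leq_row w; lia.
pose h := (row i K)^T.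
have hmx_h : hmx pts *m h = 0.
  have uK : row i K *m (hmx pts)^T = 0 by apply/sub_kermxP; exact: row_sub.
  by rewrite /h -[hmx pts]trmxK -trmx_mul uK trmx0.
have hE : h = hvec (usubmx h) (- dsubmx h 0 0).
  rewrite /hvec opprK -[LHS]vsubmxK; congr col_mx.
  by apply/matrixP => x j; rewrite !ord1 !mxE.
have on_hyp j : dot (usubmx h) (pts j) = - dsubmx h 0 0.
  by apply/eqP; rewrite -subr_eq0 -(hmx_hvec pts) -hE hmx_h mxE.
have [nu [cE gamE]] := only_hyp _ _ on_hyp.
move/negP: Ki_notin_w; apply; apply/sub_rVP; exists nu.
by rewrite -[row i K]trmxK -/h hE cE gamE hvecZ linearZ.
Qed.

Lemma affine_indep_in_span (L : seq vec) a b :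
  (forall c gam, (forall x, x \in L -> dot c x = gam) ->
     exists nu : R, c = nu *: a /\ gam = nu * b) ->
  exists xs : 'I_n -> vec, (forall j, xs j \in L) /\ affine_indep xs.
Proof.
move=> only_hyp; pose xs (i : 'I_(size L)) := nth 0 L i.
have rank_ge : (n <= \rank (hmx xs))%N.
  apply: (rank_hmx_ge (a := a) (b := b)) => c gam on_xs; apply: only_hyp => x xL.
  have ix : (index x L < size L)%N by rewrite index_mem.
  by have := on_xs (Ordinal ix); rewrite /xs /= nth_index.
have indep : affine_indep (fun i => xs (maxrankfun (hmx xs) i)).
  by apply/affine_indepP; rewrite -rowsub_hmx; exact: maxrowsub_free.
exists (fun j => xs (maxrankfun (hmx xs) (widen_ord rank_ge j))); split.
  by move=> j; rewrite mem_nth.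
by apply: (affine_indep_sub (g := widen_ord rank_ge)) indep => x y /(congr1 val) /= /val_inj.
Qed.

End AffineIndependence.

Section Facets.
Variables (R : realType) (n : nat).
Local Notation vec := 'cV[R]_n.
Implicit Types (S : vec -> Prop) (a : vec) (b : R).

Lemma facet_neq0 S a b : facet S a b -> ~ (a = 0 /\ b = 0).
Proof.
move=> [_ [k [[[pts [Spts indep]] _] [_ not_face_k1]]]] [a0 b0]; apply: not_face_k1.
by exists pts; split=> // i; rewrite a0 b0 dot0l.
Qed.

Lemma facet_face_affine_indep S a b : full_dim S -> facet S a b ->
  exists xs : 'I_n -> vec, (forall j, S (xs j) /\ dot a (xs j) = b) /\ affine_indep xs.
Proof.
move=> full [_ [k [[_ not_dim_k2] [face_k _]]]].
have le_nk : (n <= k)%N.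
  by rewrite leqNgt; apply/negP => lt_kn; apply/not_dim_k2/(dim_ge_le _ full).
by have [xs [face_xs indep]] := dim_ge_le le_nk face_k; exists xs.
Qed.

(* Both summands are tight on the [n] affinely independent points of the facet, and the
   one point [y] off the facet fixes the scaling. *)
Lemma facet_valid_split S a b a1 b1 a2 b2 : full_dim S -> facet S a b ->
  valid_ineq S a1 b1 -> valid_ineq S a2 b2 -> a = a1 + a2 -> b = b1 + b2 ->
  exists mu : R, 0 <= mu /\ a1 = mu *: a /\ b1 = mu * b.
Proof.
move=> full fac valid1 valid2 aE bE.
have [xs [face_xs indep]] := facet_face_affine_indep full fac.
have [y [Sy ay_neq]] := full_dim_off_hyperplane full (facet_neq0 fac).
have ay_gt : b < dot a y by rewrite lt_neqAle eq_sym ay_neq fac.1.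
have tight1 j : dot a1 (xs j) = b1.
  have [Sxj axj] := face_xs j; have := valid1 _ Sxj; have := valid2 _ Sxj.
  by move: axj; rewrite aE dotDl bE; lra.
pose mu := (dot a1 y - b1) / (dot a y - b).
have mu_ge0 : 0 <= mu by rewrite divr_ge0 // subr_ge0 ?valid1 // ltW.
exists mu; split=> //.
have on_ext i : dot (a1 - mu *: a) (ext_fam xs y i) = b1 - mu * b.
  rewrite /ext_fam dotBl dotZl; case: (split i) => [j|_]; first by rewrite tight1 (face_xs j).2.
  by rewrite /mu; field; rewrite subr_eq0.
have indep_ext := affine_indep_ext indep (fun j => (face_xs j).2) ay_neq.
have [/eqP a1E /eqP b1E] := affine_indep_hyperplane indep_ext on_ext.
by split; apply/eqP; rewrite -subr_eq0.
Qed.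

Lemma facet_of_affine_indep S a b (xs : 'I_n -> vec) y :
  valid_ineq S a b -> a != 0 ->
  (forall j, S (xs j) /\ dot a (xs j) = b) -> affine_indep xs ->
  S y -> dot a y != b -> facet S a b.
Proof.
move=> valid a_neq0 face_xs indep Sy ay_neq; split=> //; exists n; split; split.
- exists (fun i => ext_fam xs y (cast_ord (esym (addn1 n)) i)); split.
    by move=> i; rewrite /ext_fam; case: split => [j|_] //; exact: (face_xs j).1.
  apply: affine_indep_sub (affine_indep_ext indep (fun j => (face_xs j).2) ay_neq).
  exact: cast_ord_inj.
- by move=> [pts [_ /affine_indep_card]]; apply; lia.
- by exists xs.
- move=> [pts [face_pts indep_pts]].
  have [a0 _] := @affine_indep_hyperplane _ _ (fun i => pts (cast_ord (addn1 n) i)) a b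
    (affine_indep_sub (@cast_ord_inj _ _ _) indep_pts) (fun i => (face_pts _).2).
  by move/eqP: a_neq0.
Qed.

End Facets.

Section PRLP.
Variables (R : realType) (n : nat).
Local Notation vec := 'cV[R]_n.
Variables (Pts Rays : vec -> Prop).
Implicit Types (S : vec -> Prop) (a c : vec) (b gam : R).

Lemma prlp_feasibleZ a b (mu : R) : 0 <= mu ->
  prlp_feasible Pts Rays a b -> prlp_feasible Pts Rays (mu *: a) (mu * b).
Proof.
move=> mu_ge0 [Fp Fr]; split=> [p Pp|r Rr]; rewrite dotZl.
  by rewrite ler_wpM2l // Fp.
by rewrite mulr_ge0 // Fr.
Qed.

Lemma prlp_feasible_of_valid S a b : valid_ineq S a b -> (forall p, Pts p -> S p) ->
  (forall r, Rays r -> exists q, forall l, 0 <= l -> S (q + l *: r)) ->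
  prlp_feasible Pts Rays a b.
Proof.
move=> valid Pts_sub ray_sub; split=> [p /Pts_sub /valid //|r /ray_sub[q Sqr]].
by apply: (ray_bound_ge0 (beta := b) (u := dot a q)) => l /Sqr /valid; rewrite dotDr dotZr.
Qed.

Lemma prlp_extreme_of_facet S a b : full_dim S -> facet S a b ->
  (forall a' b', prlp_feasible Pts Rays a' b' -> valid_ineq S a' b') ->
  prlp_feasible Pts Rays a b -> prlp_extreme Pts Rays a b.
Proof.
move=> full fac valid F; split=> //; split.
  case: (eqVneq a 0) => [a0|]; last by left.
  by right; apply/eqP => b0; apply: (facet_neq0 fac).
move=> a1 b1 a2 b2 F1 F2 aE bE.
split; first exact: facet_valid_split full fac (valid _ _ F1) (valid _ _ F2) aE bE.
by apply: (facet_valid_split full fac (valid _ _ F2) (valid _ _ F1)); rewrite addrC.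
Qed.

Variables (Lp Lr : seq vec).
Hypotheses (Lp_Pts : enumerates Lp Pts) (Lr_Rays : enumerates Lr Rays).

Lemma prlp_feasible_perturb a b c gam : prlp_feasible Pts Rays a b ->
  (forall p, Pts p -> dot a p = b -> dot c p = gam) ->
  (forall r, Rays r -> dot a r = 0 -> dot c r = 0) ->
  exists2 e : R, 0 < e &
    forall s, `|s| <= e -> prlp_feasible Pts Rays (a + s *: c) (b + s * gam).
Proof.
move=> [Fp Fr] c_pts c_rays.
have [e1 e1_gt0 pert_pts] : exists2 e1 : R, 0 < e1 & forall s, `|s| <= e1 ->
    forall p, p \in Lp -> 0 <= (dot a p - b) + s * (dot c p - gam).
  apply: exists_eps_perturb => p /Lp_Pts Pp; first by rewrite subr_ge0 Fp.
  by move/eqP; rewrite subr_eq0 => /eqP/(c_pts p Pp)->; rewrite subrr.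
have [e2 e2_gt0 pert_rays] : exists2 e2 : R, 0 < e2 & forall s, `|s| <= e2 ->
    forall r, r \in Lr -> 0 <= dot a r + s * dot c r.
  by apply: exists_eps_perturb => r /Lr_Rays Rr; [apply: Fr | apply: c_rays].
exists (Num.min e1 e2) => [|s]; first by rewrite lt_min e1_gt0.
rewrite le_min => /andP[s_e1 s_e2]; split=> [p /Lp_Pts pLp|r /Lr_Rays rLr].
  by have := pert_pts s s_e1 p pLp; rewrite dotDl dotZl; lra.
by have := pert_rays s s_e2 r rLr; rewrite dotDl dotZl.
Qed.

(* [(a, b)] is the midpoint of the feasible [(a, b) +- e (c, gam)]. *)
Lemma prlp_extreme_perturb a b c gam : prlp_extreme Pts Rays a b ->
  (forall p, Pts p -> dot a p = b -> dot c p = gam) ->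
  (forall r, Rays r -> dot a r = 0 -> dot c r = 0) ->
  exists nu : R, c = nu *: a /\ gam = nu * b.
Proof.
move=> [F [_ ext]] c_pts c_rays.
have [e e_gt0 Fe] := prlp_feasible_perturb F c_pts c_rays.
have e_neq0 : e != 0 by rewrite gt_eqF.
have half s : `|s| <= e ->
    prlp_feasible Pts Rays (2^-1 *: (a + s *: c)) (2^-1 * (b + s * gam)).
  by move/Fe; apply: prlp_feasibleZ; rewrite invr_ge0 ler0n.
have e_norm : `|e| <= e /\ `|- e| <= e by rewrite normrN ger0_norm ?(ltW e_gt0).
have [[mu [_ [aE bE]]] _] := ext _ _ _ _ (half e e_norm.1) (half (- e) e_norm.2)
  (ltac:(by apply/matrixP => i j; rewrite !mxE; field))
  (ltac:(by field)).
exists ((2 * mu - 1) / e); split.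
  apply/matrixP => i j; move/matrixP: aE => /(_ i j); rewrite !mxE => aE.
  have -> : c i j = (2 * (mu * a i j) - a i j) / e by rewrite -aE; field.
  by field.
have -> : gam = (2 * (mu * b) - b) / e by rewrite -bE; field.
by field.
Qed.

Lemma prlp_extreme_tight_point a b : prlp_extreme Pts Rays a b -> a != 0 ->
  exists p, Pts p /\ dot a p = b.
Proof.
move=> ext a_neq0; apply: NNPP => no_tight.
have [nu [/esym/eqP]] := prlp_extreme_perturb (c := 0) (gam := 1) ext
  (fun p Pp ap => ltac:(by case: no_tight; exists p)) (fun r _ _ => dot0l r).
rewrite scaler_eq0 (negPf a_neq0) orbF => /eqP-> /eqP.
by rewrite mul0r oner_eq0.
Qed.

Variable S : vec -> Prop.
Hypotheses (Pts_sub : forall p, Pts p -> S p)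
  (PtsRays_sub : forall p r, Pts p -> Rays r -> S (p + r))
  (valid_S : forall a b, prlp_feasible Pts Rays a b -> valid_ineq S a b).

(* Otherwise [(- a, - b)] is feasible, and [(a, b) = (2 a, 2 b) + (- a, - b)] is not
   a conic decomposition along the ray of [(a, b)]. *)
Lemma prlp_extreme_off_point a b : prlp_extreme Pts Rays a b -> a != 0 ->
  exists y, S y /\ dot a y != b.
Proof.
move=> ext a_neq0; have [p0 [Pp0 ap0]] := prlp_extreme_tight_point ext a_neq0.
apply: NNPP => all_on.
have on x : S x -> dot a x = b.
  by move=> Sx; apply: NNPP => ax; apply: all_on; exists x; split=> //; apply/eqP.
have FN : prlp_feasible Pts Rays (- a) (- b).
  split=> [p /Pts_sub /on|r Rr]; rewrite dotNl; first by move->.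
  by have := on _ (PtsRays_sub Pp0 Rr); rewrite dotDr ap0 oppr_ge0; lra.
have F2 := prlp_feasibleZ (ler0n R 2) ext.1.
have [_ [mu [mu_ge0 [aE _]]]] := ext.2.2 _ _ _ _ F2 FN
  (ltac:(by rewrite scaler_nat mulr2n addrK)) (ltac:(by rewrite mulr_natl mulr2n addrK)).
have /eqP : (1 + mu) *: a = 0 by rewrite scalerDl scale1r -aE subrr.
by rewrite scaler_eq0 (negPf a_neq0) orbF; lra.
Qed.

Lemma facet_of_prlp_extreme a b : prlp_extreme Pts Rays a b -> a != 0 -> facet S a b.
Proof.
move=> ext a_neq0; have [p0 [Pp0 ap0]] := prlp_extreme_tight_point ext a_neq0.
have [y [Sy ay_neq]] := prlp_extreme_off_point ext a_neq0.
pose face := [seq p <- Lp | dot a p == b] ++ [seq p0 + r | r <- [seq r <- Lr | dot a r == 0]].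
have face_on x : x \in face -> S x /\ dot a x = b.
  rewrite mem_cat => /orP[|/mapP[r]]; rewrite mem_filter.
    by case/andP=> /eqP ax /Lp_Pts Px; split=> //; apply: Pts_sub.
  by case/andP=> /eqP ar /Lr_Rays Rr ->; rewrite dotDr ap0 ar addr0; split=> //; apply: PtsRays_sub.
have [xs [xs_face indep]] : exists xs : 'I_n -> vec, (forall j, xs j \in face) /\ affine_indep xs.
  apply: affine_indep_in_span => c gam c_face; apply: prlp_extreme_perturb ext _ _.
    by move=> p /Lp_Pts pLp ap; apply: c_face; rewrite mem_cat mem_filter ap eqxx pLp.
  move=> r /Lr_Rays rLr ar.
  have cp0 : dot c p0 = gam by apply: c_face; rewrite mem_cat mem_filter ap0 eqxx (Lp_Pts p0).1.
  have : dot c (p0 + r) = gam.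
    by apply: c_face; rewrite mem_cat; apply/orP; right; apply: map_f; rewrite mem_filter ar eqxx.
  by rewrite dotDr cp0; lra.
apply: facet_of_affine_indep (valid_S ext.1) a_neq0 _ indep Sy ay_neq.
by move=> j; apply: face_on.
Qed.

End PRLP.

(* The recession cone of the empty set is the whole space, which has no extreme ray. *)
Lemma extreme_ray_half_line (R : realType) n (S : 'cV[R]_n -> Prop) r :
  extreme_ray S r -> exists q, forall l, 0 <= l -> S (q + l *: r).
Proof.
move=> [r_neq0 [rec_r r_ext]].
suff [q Sq] : exists q, S q by exists q => l; exact: rec_r.
apply: NNPP => empty; move/eqP: r_neq0; apply.
have cone_all z : rec_cone S z by move=> x l Sx; case: empty; exists x.
have [_ [mu [mu_ge0 muE]]] := r_ext _ _ (cone_all (r + r)) (cone_all (- r)) (esym (addrK r r)).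
have /eqP : (1 + mu) *: r = 0 by rewrite scalerDl scale1r -muE subrr.
by rewrite scaler_eq0 gt_eqF ?ltr_pwDl // => /eqP.
Qed.

Lemma prlp_valid_polyh (R : realType) n m (M : 'M[R]_(m, n)) c
    (Pts Rays : 'cV[R]_n -> Prop) Rs a b :
  pointed (polyh M c) -> (forall p, extreme_point (polyh M c) p -> Pts p) ->
  complete_rays (polyh M c) Rs -> (forall r, r \in Rs -> Rays r) ->
  prlp_feasible Pts Rays a b -> valid_ineq (polyh M c) a b.
Proof.
move=> Qpt Pts_ext [_ Rs_rays] Rays_Rs [Fp Fr].
apply: valid_polyh_of_extreme => // [p /Pts_ext/Fp //|r /Rs_rays[mu [mu_gt0 /Rays_Rs/Fr]]].
by rewrite dotZr pmulr_rge0.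
Qed.

Unset Implicit Arguments.

Theorem corollary3 (R : realType) (n m : nat) (A : 'M[R]_(m, n)) (b : 'cV[R]_m)
    (I : {set 'I_n}) (T : finType) (k : T -> nat)
    (D : forall t : T, 'M[R]_(k t, n)) (D0 : forall t : T, 'cV[R]_(k t))
    (Rt : T -> seq 'cV[R]_n) :
  rational_mx A -> rational_mx b ->
  full_dim (polyh A b) -> pointed (polyh A b) ->
  let P := polyh A b in
  let PI := mixed_int P I in
  let Pt := fun t x => P x /\ polyh (D t) (D0 t) x in
  let PD := cl_set (conv (fun x => exists t, Pt t x)) in
  (forall x, PI x -> PD x) ->
  (forall t, complete_rays (Pt t) (Rt t)) ->
  let Pstar := fun p => exists t, extreme_point (Pt t) p in
  let Rstar := fun r => exists t, r \in Rt t in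
  [/\ proper_coll PI Pstar Rstar,
      (forall a beta, prlp_extreme Pstar Rstar a beta -> a != 0 -> facet PD a beta) &
      (full_dim PD -> forall a beta, facet PD a beta ->
         prlp_feasible Pstar Rstar a beta /\ prlp_extreme Pstar Rstar a beta)].
Proof.
move=> _ _ _ P_pt P PI Pt PD PI_PD Rt_rays Pstar Rstar.
have PtE t : Pt t = polyh (col_mx A (D t)) (col_mx b (D0 t)).
  apply: functional_extensionality => x; apply: propositional_extensionality.
  exact: iff_sym (polyh_col_mx _ _ _ _ _).
have valid_PD a beta : prlp_feasible Pstar Rstar a beta -> valid_ineq PD a beta.
  move=> F; apply: valid_clconv => x [t]; move: x; rewrite PtE.
  apply: prlp_valid_polyh F; first exact: pointed_polyh_col_mx.
  - by rewrite -PtE => p ext_p; exists t.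
  - by rewrite -PtE.
  - by move=> r r_t; exists t.
have ray_half r : Rstar r -> exists q, forall l, 0 <= l -> exists t, Pt t (q + l *: r).
  move=> [t /(Rt_rays t).1 /extreme_ray_half_line[q Ptqr]].
  by exists q => l l_ge0; exists t; exact: Ptqr.
have [Lp Lp_Pstar] : exists Lp, enumerates Lp Pstar.
  by apply: enumerates_bigcup => t; rewrite PtE; apply: extreme_points_enum.
have [Lr Lr_Rstar] : exists Lr, enumerates Lr Rstar.
  by apply: enumerates_bigcup => t; exists (Rt t).
split.
- by move=> a beta F x /PI_PD; apply: valid_PD.
- move=> a beta ext a_neq0.
  apply: (facet_of_prlp_extreme Lp_Pstar Lr_Rstar _ _ valid_PD ext a_neq0).
    by move=> p [t [Ptp _]]; apply: sub_clconv; exists t.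
  by move=> p r [t [Ptp _]] /ray_half[q Ptqr]; apply: clconv_add_ray Ptqr; exists t.
- move=> full a beta fac.
  have F : prlp_feasible Pstar Rstar a beta.
    apply: (prlp_feasible_of_valid fac.1) => [p [t [Ptp _]]|r /ray_half[q Ptqr]].
      by apply: sub_clconv; exists t.
    by exists q => l /Ptqr; apply: sub_clconv.
  by split=> //; apply: prlp_extreme_of_facet full fac valid_PD F.
Qed.
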